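(* Let $A\subset\mathbb{R}$, let $f:A\to\mathbb{R}$ be a function and let $a,L\in\mathbb{R}$. Then $T_5\lim_{x\to a}f(x)=L$ if and only if there exist functions $g,h:A\to\mathbb{R}$ and a real $\delta_0>0$ such that $f(x)=g(x)+h(x)$ for all $x\in A$, $\lim_{x\to a}g(x)=L$, and the set $\left\{x\in\left((a-\delta_0,a+\delta_0)\setminus\{a\}\right)\cap A:\ h(x)\neq0\right\}$ is countable.
   Context: $T_5\lim_{x\to a}f(x)=L$ means: for every real $\varepsilon>0$ there exists a real $\delta_\varepsilon>0$ such that the set $\left\{x\in\left((a-\delta_{\varepsilon},a+\delta_{\varepsilon})\setminus\{a\}\right)\cap A:\ |f(x)-L|\geq\varepsilon\right\}$ is countable (finite or countably infinite). The statement $\lim_{x\to a}g(x)=L$ denotes the classical limit: for every $\varepsilon>0$ there is $\delta>0$ such that $|g(x)-L|<\varepsilon$ for all $x\in A$ with $0<|x-a|<\delta$. *)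

From mathcomp Require Import all_boot all_order all_algebra.
From mathcomp Require Import all_classical all_reals.
Set Implicit Arguments. Unset Strict Implicit. Unset Printing Implicit Defensive.
Import Order.TTheory GRing.Theory Num.Theory.
Local Open Scope ring_scope.
Local Open Scope classical_set_scope.

Definition classical_lim (R : realType) (A : set R) (g : R -> R) (a L : R) : Prop :=
  forall eps : R, 0 < eps -> exists delta : R, 0 < delta /\
    forall x, A x -> 0 < `|x - a| -> `|x - a| < delta -> `|g x - L| < eps.

Definition T5_lim (R : realType) (A : set R) (f : R -> R) (a L : R) : Prop :=
  forall eps : R, 0 < eps -> exists delta : R, 0 < delta /\
    countable [set x | a - delta < x < a + delta /\ x != a /\ A x
                       /\ eps <= `|f x - L|].

From mathcomp Require Import all_boot all_order all_algebra.
From mathcomp Require Import all_classical all_reals.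
Set Implicit Arguments. Unset Strict Implicit. Unset Printing Implicit Defensive.
Import Order.TTheory GRing.Theory Num.Theory.
Local Open Scope ring_scope.
Local Open Scope classical_set_scope.

(* For every eps > 0 the points where |f - L| >= eps form a countable set near
   a; taking eps = 1/(n+1) and the union over n yields one countable set S off
   which f tends to L classically.  Redefining f to be L on S gives g, and
   h := f - g vanishes off S.  Conversely, a classical limit has no exceptional
   points at all, and adding h only adds the countably many points where h is
   nonzero. *)

Lemma countableU (T : Type) (A B : set T) :
  countable A -> countable B -> countable (A `|` B).
Proof.
move=> cA cB; rewrite -bigcup2E.
by apply: bigcup_countable => [|[|[|n]] _] //=; exact: countableP.
Qed.

Lemma exists_invSn_lt (R : archiRealFieldType) (eps : R) :
  0 < eps -> exists n : nat, n.+1%:R^-1 < eps.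
Proof.
move=> eps_gt0; exists (Num.truncn eps^-1).
by rewrite -invf_plt ?posrE ?ltr0n // truncnS_gt.
Qed.

Section T5Limits.
Variables (R : realType) (A : set R) (a L : R).

Lemma punctured_intervalE (d x : R) :
  (a - d < x < a + d) && (x != a) = (0 < `|x - a| < d).
Proof. by rewrite normr_gt0 subr_eq0 distrC ltr_distlC andbC. Qed.

Lemma centered_interval_le (d d' x : R) :
  d' <= d -> a - d' < x < a + d' -> a - d < x < a + d.
Proof. by rewrite -!ltr_distlC => d'_le /lt_le_trans; apply. Qed.

Lemma classical_lim_T5_lim (f : R -> R) :
  classical_lim A f a L -> T5_lim A f a L.
Proof.
move=> flim eps eps_gt0; have [d [d_gt0 fd]] := flim eps eps_gt0.
exists d; split => //.
suff -> : [set x | a - d < x < a + d /\ x != a /\ A x /\ eps <= `|f x - L|] = set0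
  by exact: countable0.
apply/seteqP; split => // x /= [xd [xa [Ax]]].
have /andP[x_gt x_lt] : 0 < `|x - a| < d by rewrite -punctured_intervalE xd xa.
by rewrite leNgt fd.
Qed.

Lemma T5_lim_add_countable (f g h : R -> R) (delta0 : R) :
  0 < delta0 -> (forall x, A x -> f x = g x + h x) ->
  countable [set x | a - delta0 < x < a + delta0 /\ x != a /\ A x /\ h x != 0] ->
  T5_lim A g a L -> T5_lim A f a L.
Proof.
move=> delta0_gt0 fE hc glim eps eps_gt0.
have [d [d_gt0 gc]] := glim eps eps_gt0.
have d_le : Num.min d delta0 <= d by rewrite ge_min lexx.
have delta0_le : Num.min d delta0 <= delta0 by rewrite ge_min lexx orbT.
exists (Num.min d delta0); split; first by rewrite lt_min d_gt0.
apply: sub_countable (countableU gc hc); apply: subset_card_le.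
move=> x /= [xd [xa [Ax fx]]].
have [h0|_] := eqVneq (h x) 0; [left | right].
- split; first exact: centered_interval_le d_le xd.
  by rewrite -(addr0 (g x)) -h0 -fE.
- by split; first exact: centered_interval_le delta0_le xd.
Qed.

Lemma T5_lim_classical_off_countable (f : R -> R) :
  T5_lim A f a L -> exists2 S : set R, countable S & classical_lim (A `\` S) f a L.
Proof.
move=> flim.
have /choice[D DP] : forall n : nat, exists d : R, 0 < d /\
    countable [set x | a - d < x < a + d /\ x != a /\ A x /\ n.+1%:R^-1 <= `|f x - L|].
  by move=> n; apply: flim; rewrite invr_gt0 ltr0n.
exists (\bigcup_n [set x | a - D n < x < a + D n /\ x != a /\ A x /\
                           n.+1%:R^-1 <= `|f x - L|]).
  by apply: bigcup_countable => [|n _]; [exact: countableP | case: (DP n)].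
move=> eps eps_gt0; have [n n_lt] := exists_invSn_lt eps_gt0.
exists (D n); split; first by case: (DP n).
move=> x [Ax xS] x_gt x_lt; rewrite ltNge; apply/negP => eps_le; apply: xS.
exists n => //=; have /andP[xd xa] : (a - D n < x < a + D n) && (x != a).
  by rewrite punctured_intervalE x_gt.
by split=> //; split=> //; split=> //; exact: le_trans (ltW n_lt) eps_le.
Qed.

Lemma classical_lim_patch (f : R -> R) (S : set R) :
  classical_lim (A `\` S) f a L ->
  classical_lim A (fun x => if x \in S then L else f x) a L.
Proof.
move=> flim eps eps_gt0; have [d [d_gt0 fd]] := flim eps eps_gt0.
exists d; split=> // x Ax x_gt x_lt; case: ifPn => [_|]; rewrite ?notin_setE.
- by rewrite subrr normr0.
- by move=> xS; apply: fd.
Qed.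

End T5Limits.

Theorem theorem3 (R : realType) (A : set R) (f : R -> R) (a L : R) :
  T5_lim A f a L <->
  exists (g h : R -> R) (delta0 : R),
    0 < delta0 /\
    (forall x, A x -> f x = g x + h x) /\
    classical_lim A g a L /\
    countable [set x | a - delta0 < x < a + delta0 /\ x != a /\ A x /\ h x != 0].
Proof.
split=> [/T5_lim_classical_off_countable[S Sc flim] | [g [h [d0 [d0_gt0 [fE [glim hc]]]]]]].
  pose g x := if x \in S then L else f x.
  exists g, (f \- g), 1; split=> //; split; first by move=> x _; rewrite addrC subrK.
  split; first exact: classical_lim_patch.
  apply: sub_countable Sc; apply: subset_card_le => x /= [_ [_ [_]]].
  by rewrite /g; case: ifPn => [/set_mem //|_]; rewrite subrr eqxx.
exact: T5_lim_add_countable d0_gt0 fE hc (classical_lim_T5_lim glim).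
Qed.
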